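(* Let $\lambda>0$ and $\alpha_0,\tilde{\alpha}_0,\alpha,\tilde{\alpha}\in(0,1]$ with $\frac{\tilde{\alpha}}{\alpha}-\frac{\tilde{\alpha}_0}{\alpha_0}>0$. For $j\geq0$ set $\alpha_j=\alpha$, $\tilde\alpha_j=\tilde\alpha$ for $j\geq1$, $d_{k,j}:=\frac{\lambda^k}{\Gamma(\alpha_jk+1)}$, $D_j(x):=E_{\alpha_j,1}(\lambda x)$ and $\delta_j(t):=t^{\tilde{\alpha}_j}$; also set $v(\delta(t)):=t^{\tilde{\alpha}/\alpha}$ and $\Delta(u):=(\lambda u)^{1/\alpha}$. Then for all $u>0$, $$\lim_{t\to\infty}\frac{1}{t^{\tilde{\alpha}/\alpha}}\log\sum_{k\geq0}\frac{d_{k,k}(u\delta_k(t))^k}{D_k(\delta_k(t))}=\max\{\Delta(u)-\Delta(1),0\}=\max\{\lambda^{1/\alpha}(u^{1/\alpha}-1),0\}.$$ Explicitly, the sum equals $\frac{1}{E_{\alpha_0,1}(\lambda t^{\tilde{\alpha}_0})}+\sum_{k\geq1}\frac{\lambda^k(ut^{\tilde{\alpha}})^k}{\Gamma(\alpha k+1)E_{\alpha,1}(\lambda t^{\tilde{\alpha}})}$.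
   Context: For $a\in(0,1]$, $E_{a,1}(x):=\sum_{k\geq0}\frac{x^k}{\Gamma(ak+1)}$ denotes the Mittag-Leffler function (with two parameters $a$ and $1$). *)

From Stdlib Require Import Reals.
From Coquelicot Require Import Coquelicot.
Open Scope R_scope.

Definition Gamma (x : R) : R :=
  RInt_gen (fun t => Rpower t (x - 1) * exp (- t)) (at_right 0) (Rbar_locally p_infty).

Definition ML (a x : R) : R :=
  Series (fun k : nat => x ^ k / Gamma (a * INR k + 1)).

Definition seq0 (c0 c : R) (j : nat) : R := match j with O => c0 | S _ => c end.

Definition dkj (lam a0 a : R) (k j : nat) : R := lam ^ k / Gamma (seq0 a0 a j * INR k + 1).
Definition Dj (lam a0 a : R) (j : nat) (x : R) : R := ML (seq0 a0 a j) (lam * x).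
Definition deltaj (ta0 ta : R) (j : nat) (t : R) : R := Rpower t (seq0 ta0 ta j).
Definition DeltaF (lam a u : R) : R := Rpower (lam * u) (1 / a).

From Stdlib Require Import Reals Lra Classical.
From Coquelicot Require Import Coquelicot.
Open Scope R_scope.

(* Crude Stirling bounds on [Gamma (p + 1)], read off the defining integral, show that the
   terms [y^k / Gamma (a k + 1)] of [E_{a,1}(y)] are at most [e^(z+3) e^(-a k / (z+1))], where
   [z = y^(1/a)], and that the term with [a k] just below [z] is at least [e^(z-a-1) / (z+1)];
   hence [ln E_{a,1}(y) = z + O(ln z)].  With [T = t^(ta/a)] and [S] the sum, the summands
   [k >= 1] are those of [E_{a,1}(lam u t^ta)] divided by [E_{a,1}(lam t^ta)], whose logarithms
   are [Delta(u) T] and [Delta(1) T] up to [O(ln T)]; this gives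
   [ln S <= max(Delta(u) - Delta(1), 0) T + O(ln T)] and, through the dominant term,
   [ln S >= (Delta(u) - Delta(1)) T - O(ln T)].  The summand [k = 0] is [exp(- O(t^(ta0/a0)))],
   which is [exp(- o(T))] since [ta0/a0 < ta/a], so [ln S >= - o(T)]. *)

Lemma ln_le_sub_1 (x : R) : 0 < x -> ln x <= x - 1.
Proof. intros Hx. pose proof (exp_ineq1_le (ln x)). rewrite exp_ln in H; lra. Qed.

Lemma exp_le_exp (x y : R) : x <= y -> exp x <= exp y.
Proof. intros [H | ->]; [left; apply exp_increasing |]; lra. Qed.

Lemma ln_nonneg (x : R) : 1 <= x -> 0 <= ln x.
Proof. intros Hx. rewrite <- ln_1. apply ln_le; lra. Qed.

Lemma Rpower_pos (x y : R) : 0 < Rpower x y.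
Proof. apply exp_pos. Qed.

Lemma Rpower_mult_Rpower_root (c t q a : R) : 0 < c -> a <> 0 ->
  Rpower (c * Rpower t q) (1 / a) = Rpower c (1 / a) * Rpower t (q / a).
Proof.
  intros Hc Ha. rewrite <- Rpower_mult_distr by (apply Hc || apply Rpower_pos).
  rewrite Rpower_mult. f_equal. f_equal. field. exact Ha.
Qed.

Lemma ln_1_plus_le (r : R) : 0 < r -> ln (1 + r) <= ln 2 + Rmax (ln r) 0.
Proof.
  intros Hr. destruct (Rle_lt_dec r 1) as [Hle | Hgt].
  - pose proof (ln_le (1 + r) 2 ltac:(lra) ltac:(lra)). pose proof (Rmax_r (ln r) 0). lra.
  - pose proof (ln_le (1 + r) (2 * r) ltac:(lra) ltac:(lra)). rewrite ln_mult in H by lra.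
    pose proof (Rmax_l (ln r) 0). lra.
Qed.

Lemma Series_nonneg (a : nat -> R) :
  (forall n, 0 <= a n) -> ex_series a -> 0 <= Series a.
Proof.
  intros Ha Hex.
  replace 0 with (Series (fun n => 0 * a n)) by (rewrite Series_scal_l; ring).
  apply Series_le; [intros n; split; rewrite ?Rmult_0_l; auto; lra | exact Hex].
Qed.

Lemma Series_ge_term (a : nat -> R) (k : nat) :
  (forall n, 0 <= a n) -> ex_series a -> a k <= Series a.
Proof.
  revert a; induction k as [| k IH]; intros a Ha Hex;
    rewrite (Series_incr_1 a Hex);
    assert (Hex1 : ex_series (fun n => a (S n))) by exact (proj1 (ex_series_incr_1 a) Hex).
  - pose proof (Series_nonneg _ (fun n => Ha (S n)) Hex1). lra.
  - pose proof (IH (fun n => a (S n)) (fun n => Ha (S n)) Hex1). pose proof (Ha 0%nat). lra.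
Qed.

(** * Improper integrals of nonnegative functions *)

Section NonnegIntegrand.

Variable f : R -> R.
Hypothesis f_nonneg : forall x, 0 < x -> 0 <= f x.
Hypothesis f_integrable : forall e b, 0 < e -> e <= b -> ex_RInt f e b.

Lemma RInt_le_RInt_widen (x e b y : R) :
  0 < x -> x <= e -> e <= b -> b <= y -> RInt f e b <= RInt f x y.
Proof.
  intros Hx Hxe Heb Hby.
  rewrite <- (RInt_Chasles f x e y), <- (RInt_Chasles f e b y);
    try apply f_integrable; try lra.
  assert (0 <= RInt f x e)
    by (apply RInt_ge_0; try apply f_integrable; intros; try apply f_nonneg; lra).
  assert (0 <= RInt f b y)
    by (apply RInt_ge_0; try apply f_integrable; intros; try apply f_nonneg; lra).
  unfold plus; simpl; lra.
Qed.

Lemma is_RInt_gen_nonneg_bounded (M : R) :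
  (forall e b, 0 < e -> e <= b -> RInt f e b <= M) ->
  exists l, is_RInt_gen f (at_right 0) (Rbar_locally p_infty) l /\ l <= M /\
    forall e b, 0 < e -> e <= b -> RInt f e b <= l.
Proof.
  intros HM.
  set (I := fun v => exists e b, 0 < e /\ e <= b /\ v = RInt f e b).
  assert (I_bound : bound I) by (exists M; intros v (e & b & He & Heb & ->); auto).
  assert (I_inhabited : exists v, I v) by (exists (RInt f 1 1), 1, 1; repeat split; lra).
  destruct (completeness I I_bound I_inhabited) as [l [l_ub l_least]].
  assert (le_l : forall e b, 0 < e -> e <= b -> RInt f e b <= l)
    by (intros e b He Heb; apply l_ub; exists e, b; auto).
  exists l; repeat split; [| apply l_least; intros v (e & b & He & Heb & ->); auto | exact le_l].
  intros P [eps HP].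
  assert (near_l : exists e0 b0, 0 < e0 /\ e0 <= b0 /\ l - eps < RInt f e0 b0).
  { apply NNPP; intros Hn.
    assert (l <= l - eps); [| destruct eps; simpl in *; lra].
    apply l_least; intros v (e & b & He & Heb & ->).
    apply Rnot_lt_le; intros Hlt; apply Hn; exists e, b; auto. }
  destruct near_l as (e0 & b0 & He0 & Heb0 & Hlt).
  apply (Filter_prod _ _ _ (fun x => 0 < x < e0) (fun y => b0 < y)).
  - exists (mkposreal e0 He0); intros x Hx Hx0; split; [exact Hx0 |].
    unfold ball in Hx; simpl in Hx; unfold AbsRing_ball, abs, minus, plus, opp in Hx; simpl in Hx.
    apply Rabs_lt_between in Hx; lra.
  - exists b0; auto.
  - intros x y [Hx0 Hxe] Hby; simpl.
    exists (RInt f x y); split; [exact (RInt_correct f x y (f_integrable x y Hx0 ltac:(lra))) |].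
    apply HP; unfold ball; simpl; unfold AbsRing_ball, abs, minus, plus, opp; simpl.
    pose proof (le_l x y Hx0 ltac:(lra)).
    pose proof (RInt_le_RInt_widen x e0 b0 y Hx0 ltac:(lra) Heb0 ltac:(lra)).
    apply Rabs_lt_between; lra.
Qed.

End NonnegIntegrand.

(** * Crude Stirling bounds *)

Lemma continuous_gamma_integrand (p x : R) :
  0 < x -> continuous (fun t => Rpower t p * exp (- t)) x.
Proof.
  intros Hx. apply (ex_derive_continuous (K := R_AbsRing) (V := R_NormedModule)).
  unfold Rpower. auto_derive. lra.
Qed.

Lemma ex_RInt_gamma_integrand (p e b : R) :
  0 < e -> e <= b -> ex_RInt (fun t => Rpower t p * exp (- t)) e b.
Proof.
  intros He Heb. apply (ex_RInt_continuous (V := R_CompleteNormedModule)).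
  intros x Hx. rewrite Rmin_left in Hx by lra. apply continuous_gamma_integrand. lra.
Qed.

(* From [ln (t / (p + 1)) <= t / (p + 1) - 1]. *)
Lemma gamma_integrand_le (p t : R) : 0 <= p -> 0 < t ->
  Rpower t p * exp (- t) <= Rpower ((p + 1) / exp 1) p * exp (- t / (p + 1)).
Proof.
  intros Hp Ht. unfold Rpower. rewrite <- !exp_plus. apply exp_le_exp.
  rewrite ln_div, ln_exp by (try apply exp_pos; lra).
  pose proof (ln_le_sub_1 (t / (p + 1)) ltac:(apply Rdiv_lt_0_compat; lra)) as Hln.
  rewrite ln_div in Hln by lra.
  assert (p * (ln t - ln (p + 1)) <= p * (t / (p + 1) - 1)) by (apply Rmult_le_compat_l; lra).
  assert (p * (t / (p + 1)) = t - t / (p + 1)) by (field; lra).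
  unfold Rdiv in *. nra.
Qed.

Lemma RInt_gamma_integrand_le (p e b : R) : 0 <= p -> 0 < e -> e <= b ->
  RInt (fun t => Rpower t p * exp (- t)) e b <= Rpower ((p + 1) / exp 1) p * (p + 1).
Proof.
  intros Hp He Heb.
  set (K := Rpower ((p + 1) / exp 1) p).
  set (F := fun t => - (p + 1) * K * exp (- t / (p + 1))).
  assert (HF : is_RInt (fun t => K * exp (- t / (p + 1))) e b (minus (F b) (F e))).
  { apply (is_RInt_derive (V := R_CompleteNormedModule)).
    - intros x _. unfold F. auto_derive; [auto | unfold Rdiv; field; lra].
    - intros x _. apply (ex_derive_continuous (K := R_AbsRing) (V := R_NormedModule)).
      auto_derive. auto. }
  eapply Rle_trans.
  - apply RInt_le; [exact Heb | apply ex_RInt_gamma_integrand; lra | eexists; exact HF |].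
    intros x Hx. apply gamma_integrand_le; lra.
  - rewrite (is_RInt_unique _ _ _ _ HF). unfold minus, plus, opp, F; simpl.
    assert (0 < K) by apply Rpower_pos.
    pose proof (exp_pos (- b / (p + 1))).
    assert (exp (- e / (p + 1)) <= exp 0).
    { apply exp_le_exp.
      assert (0 < e / (p + 1)) by (apply Rdiv_lt_0_compat; lra). unfold Rdiv in *. lra. }
    rewrite exp_0 in H1.
    assert (0 < (p + 1) * K) by nra.
    assert ((p + 1) * K * exp (- e / (p + 1)) <= (p + 1) * K * 1) by (apply Rmult_le_compat_l; lra).
    assert (0 <= (p + 1) * K * exp (- b / (p + 1))) by nra.
    lra.
Qed.

(* The lower bound only integrates over [p + 1, p + 2]. *)
Lemma Gamma_succ_bounds (p : R) : 0 <= p ->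
  Rpower (p + 1) p * exp (- (p + 2)) <= Gamma (p + 1) <= Rpower ((p + 1) / exp 1) p * (p + 1).
Proof.
  intros Hp.
  destruct (is_RInt_gen_nonneg_bounded (fun t => Rpower t p * exp (- t))
              (fun x _ => Rlt_le _ _ (Rmult_lt_0_compat _ _ (Rpower_pos x p) (exp_pos (- x))))
              (ex_RInt_gamma_integrand p) _ (fun e b => RInt_gamma_integrand_le p e b Hp))
    as (l & Hl & Hle_M & Hge).
  assert (Gamma (p + 1) = l) as ->.
  { unfold Gamma. replace (p + 1 - 1) with p by ring. exact (is_RInt_gen_unique _ _ Hl). }
  split; [| exact Hle_M].
  eapply Rle_trans; [| apply (Hge (p + 1) (p + 2)); lra].
  replace (Rpower (p + 1) p * exp (- (p + 2)))
    with (RInt (fun _ => Rpower (p + 1) p * exp (- (p + 2))) (p + 1) (p + 2))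
    by (rewrite RInt_const; unfold scal; simpl; unfold mult; simpl; ring).
  apply RInt_le; [lra | apply ex_RInt_const | apply ex_RInt_gamma_integrand; lra |].
  intros t Ht. apply Rmult_le_compat; try (left; apply exp_pos).
  - apply Rle_Rpower_l; lra.
  - apply exp_le_exp; lra.
Qed.

Lemma Gamma_succ_pos (p : R) : 0 <= p -> 0 < Gamma (p + 1).
Proof.
  intros Hp. eapply Rlt_le_trans; [| apply (Gamma_succ_bounds p Hp)].
  apply Rmult_lt_0_compat; [apply Rpower_pos | apply exp_pos].
Qed.

Lemma ln_Gamma_succ_bounds (p : R) : 0 <= p ->
  p * ln (p + 1) - p - 2 <= ln (Gamma (p + 1)) <= p * ln (p + 1) - p + ln (p + 1).
Proof.
  intros Hp. destruct (Gamma_succ_bounds p Hp) as [Hlo Hhi].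
  apply ln_le in Hlo; [| apply Rmult_lt_0_compat; [apply Rpower_pos | apply exp_pos]].
  apply ln_le in Hhi; [| apply Gamma_succ_pos, Hp].
  rewrite ln_mult, ln_exp in Hlo by (apply Rpower_pos || apply exp_pos).
  rewrite ln_mult in Hhi by (apply Rpower_pos || lra).
  unfold Rpower in Hlo, Hhi. rewrite ln_exp in Hlo, Hhi.
  rewrite ln_div, ln_exp in Hhi by (apply exp_pos || lra).
  split; lra.
Qed.

(** * Size of the Mittag-Leffler function *)

Definition ml_term (a y : R) (k : nat) : R := y ^ k / Gamma (a * INR k + 1).

Lemma ml_term_pos (a y : R) (k : nat) : 0 <= a -> 0 < y -> 0 < ml_term a y k.
Proof.
  intros Ha Hy. apply Rdiv_lt_0_compat; [apply pow_lt, Hy |].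
  apply Gamma_succ_pos, Rmult_le_pos; [exact Ha | apply pos_INR].
Qed.

Lemma ml_term_0_ge_1 (a y : R) : 1 <= ml_term a y 0.
Proof.
  unfold ml_term. replace (a * INR 0 + 1) with (0 + 1) by (simpl; ring).
  pose proof (Gamma_succ_pos 0 (Rle_refl 0)) as Hpos.
  pose proof (proj2 (Gamma_succ_bounds 0 (Rle_refl 0))) as Hle.
  rewrite Rpower_O in Hle by (apply Rdiv_lt_0_compat; [lra | apply exp_pos]).
  simpl. unfold Rdiv. rewrite Rmult_1_l, <- Rinv_1 at 1.
  apply Rinv_le_contravar; lra.
Qed.

Lemma ln_ml_term (a y : R) (k : nat) : 0 < a -> 0 < y ->
  ln (ml_term a y k) = a * INR k * ln (Rpower y (1 / a)) - ln (Gamma (a * INR k + 1)).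
Proof.
  intros Ha Hy. unfold ml_term.
  assert (0 < Gamma (a * INR k + 1))
    by (apply Gamma_succ_pos, Rmult_le_pos; [lra | apply pos_INR]).
  rewrite ln_div, ln_pow by (try apply pow_lt; assumption).
  unfold Rpower. rewrite ln_exp. field. lra.
Qed.

Lemma ln_ml_term_le (a y : R) (k : nat) : 0 < a -> 0 < y ->
  ln (ml_term a y k) <= Rpower y (1 / a) + 3 - a * INR k / (Rpower y (1 / a) + 1).
Proof.
  intros Ha Hy. rewrite ln_ml_term by assumption.
  set (z := Rpower y (1 / a)). set (p := a * INR k).
  assert (Hz : 0 < z) by apply Rpower_pos.
  assert (Hp : 0 <= p) by (apply Rmult_le_pos; [lra | apply pos_INR]).
  pose proof (proj1 (ln_Gamma_succ_bounds p Hp)).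
  assert (Hzz : ln z - ln (z + 1) <= - (1 / (z + 1))).
  { pose proof (ln_le_sub_1 (z / (z + 1)) ltac:(apply Rdiv_lt_0_compat; lra)) as H1.
    rewrite ln_div in H1 by lra. replace (- (1 / (z + 1))) with (z / (z + 1) - 1) by (field; lra).
    exact H1. }
  assert (Hzp : ln (z + 1) - ln (p + 1) <= (z + 1) / (p + 1) - 1).
  { pose proof (ln_le_sub_1 ((z + 1) / (p + 1)) ltac:(apply Rdiv_lt_0_compat; lra)) as H1.
    rewrite ln_div in H1 by lra. exact H1. }
  assert (p * ((z + 1) / (p + 1)) <= z + 1).
  { replace (p * ((z + 1) / (p + 1))) with ((z + 1) * (p / (p + 1))) by (field; lra).
    rewrite <- (Rmult_1_r (z + 1)) at 2. apply Rmult_le_compat_l; [lra |].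
    apply Rle_div_l; lra. }
  apply (Rmult_le_compat_l p) in Hzz, Hzp; try exact Hp.
  unfold Rdiv in *. lra.
Qed.

(* The error term in [ln E_a(z^a) = z + O(ln z)]. *)
Definition ml_err (a z : R) : R := a + 3 + ln (z + 1) + ln (1 + (z + 1) / a).

Lemma ln_ml_term_ge (a y : R) (k : nat) : 0 < a -> 0 < y ->
  Rpower y (1 / a) - a < a * INR k <= Rpower y (1 / a) ->
  Rpower y (1 / a) - ml_err a (Rpower y (1 / a)) <= ln (ml_term a y k).
Proof.
  intros Ha Hy. rewrite ln_ml_term by assumption. unfold ml_err.
  set (z := Rpower y (1 / a)). set (p := a * INR k). intros [Hpz Hzp].
  assert (Hz : 0 < z) by apply Rpower_pos.
  assert (Hp : 0 <= p) by (apply Rmult_le_pos; [lra | apply pos_INR]).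
  pose proof (proj2 (ln_Gamma_succ_bounds p Hp)).
  assert (Hzz : ln (z + 1) - ln z <= 1 / z).
  { pose proof (ln_le_sub_1 ((z + 1) / z) ltac:(apply Rdiv_lt_0_compat; lra)) as H1.
    rewrite ln_div in H1 by lra. replace (1 / z) with ((z + 1) / z - 1) by (field; lra).
    exact H1. }
  assert (p / z <= 1) by (apply Rle_div_l; lra).
  assert (ln (p + 1) <= ln (z + 1)) by (apply ln_le; lra).
  assert (0 <= ln (1 + (z + 1) / a))
    by (apply ln_nonneg; assert (0 < (z + 1) / a) by (apply Rdiv_lt_0_compat; lra); lra).
  apply (Rmult_le_compat_l p) in Hzz; [| exact Hp].
  assert (p * ln (p + 1) <= p * ln (z + 1)) by (apply Rmult_le_compat_l; assumption).
  unfold Rdiv in *. lra.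
Qed.

Lemma ml_term_le_geom (a y : R) (k : nat) : 0 < a -> 0 < y ->
  ml_term a y k <=
  exp (Rpower y (1 / a) + 3) * exp (- (a / (Rpower y (1 / a) + 1))) ^ k.
Proof.
  intros Ha Hy.
  rewrite <- (exp_ln (ml_term a y k)) by (apply ml_term_pos; lra).
  assert (Hpow : forall c, exp c ^ k = exp (INR k * c))
    by (intros c; rewrite <- Rpower_pow by apply exp_pos; unfold Rpower; rewrite ln_exp;
        reflexivity).
  rewrite Hpow, <- exp_plus. apply exp_le_exp.
  eapply Rle_trans; [apply ln_ml_term_le; assumption |].
  right. unfold Rdiv. ring.
Qed.

Lemma geom_exp_neg_bounds (h : R) : 0 < h ->
  Rabs (exp (- h)) < 1 /\ / (1 - exp (- h)) <= 1 + / h.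
Proof.
  intros Hh. pose proof (exp_pos (- h)).
  assert (Hinv : exp (- h) <= / (1 + h))
    by (rewrite exp_Ropp; apply Rinv_le_contravar; [lra | apply exp_ineq1_le]).
  assert (/ (1 + h) < 1) by (rewrite <- Rinv_1; apply Rinv_lt_contravar; lra).
  rewrite Rabs_pos_eq by lra. split; [lra |].
  replace (1 + / h) with (/ (h / (1 + h))) by (field; lra).
  apply Rinv_le_contravar; [apply Rdiv_lt_0_compat; lra |].
  replace (h / (1 + h)) with (1 - / (1 + h)) by (field; lra). lra.
Qed.

Lemma ex_series_ml_term (a y : R) : 0 < a -> 0 < y -> ex_series (ml_term a y).
Proof.
  intros Ha Hy.
  assert (Hh : 0 < a / (Rpower y (1 / a) + 1))
    by (apply Rdiv_lt_0_compat; [| pose proof (Rpower_pos y (1 / a))]; lra).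
  apply (ex_series_le (K := R_AbsRing) (V := R_CompleteNormedModule) _
           (fun k => exp (Rpower y (1 / a) + 3) * exp (- (a / (Rpower y (1 / a) + 1))) ^ k)).
  - intros k. unfold norm; simpl; unfold abs; simpl.
    rewrite Rabs_pos_eq by (left; apply ml_term_pos; lra). apply ml_term_le_geom; assumption.
  - apply (ex_series_scal_l (K := R_AbsRing) (V := R_NormedModule)), ex_series_geom.
    apply geom_exp_neg_bounds, Hh.
Qed.

Lemma ML_le (a y : R) : 0 < a -> 0 < y ->
  ML a y <= exp (Rpower y (1 / a) + 3) * (1 + (Rpower y (1 / a) + 1) / a).
Proof.
  intros Ha Hy.
  set (z := Rpower y (1 / a)).
  assert (Hz : 0 < z) by apply Rpower_pos.
  assert (Hh : 0 < a / (z + 1)) by (apply Rdiv_lt_0_compat; lra).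
  destruct (geom_exp_neg_bounds _ Hh) as [Hq Hsum].
  eapply Rle_trans.
  - apply (Series_le _ (fun k => exp (z + 3) * exp (- (a / (z + 1))) ^ k)).
    + intros k. split; [left; apply ml_term_pos; lra | apply ml_term_le_geom; assumption].
    + apply (ex_series_scal_l (K := R_AbsRing) (V := R_NormedModule)), ex_series_geom, Hq.
  - rewrite Series_scal_l, Series_geom by exact Hq.
    apply Rmult_le_compat_l; [left; apply exp_pos |].
    replace ((z + 1) / a) with (/ (a / (z + 1))) by (field; split; lra). exact Hsum.
Qed.

Lemma ml_term_le_ML (a y : R) (k : nat) : 0 < a -> 0 < y -> ml_term a y k <= ML a y.
Proof.
  intros Ha Hy. apply Series_ge_term; [| apply ex_series_ml_term; assumption].
  intros n. left. apply ml_term_pos; lra.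
Qed.

Lemma exists_INR_mul_near (a z : R) : 0 < a -> 0 <= z ->
  exists k : nat, z - a < a * INR k <= z.
Proof.
  intros Ha Hz. destruct (nfloor_ex (z / a)) as [k [Hk1 Hk2]]; [apply Rdiv_le_0_compat; lra |].
  exists k.
  apply (Rmult_le_compat_l a) in Hk1; apply (Rmult_lt_compat_l a) in Hk2; try lra.
  replace (a * (z / a)) with z in Hk1, Hk2 by (field; lra). lra.
Qed.

Lemma ln_ML_bounds (a y : R) : 0 < a -> 0 < y ->
  0 < ML a y /\ Rabs (ln (ML a y) - Rpower y (1 / a)) <= ml_err a (Rpower y (1 / a)).
Proof.
  intros Ha Hy. set (z := Rpower y (1 / a)).
  assert (Hz : 0 < z) by apply Rpower_pos.
  destruct (exists_INR_mul_near a z Ha ltac:(lra)) as [k Hk].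
  assert (Hterm := ml_term_le_ML a y k Ha Hy).
  assert (Hpos := ml_term_pos a y k ltac:(lra) Hy).
  assert (HML : 0 < ML a y) by lra.
  split; [exact HML |]. apply Rabs_le. split.
  - pose proof (ln_ml_term_ge a y k Ha Hy Hk) as Hlo. pose proof (ln_le _ _ Hpos Hterm).
    fold z in Hlo. lra.
  - assert (0 < (z + 1) / a) by (apply Rdiv_lt_0_compat; lra).
    pose proof (ln_le _ _ HML (ML_le a y Ha Hy)) as Hln.
    fold z in Hln. rewrite ln_mult, ln_exp in Hln by (apply exp_pos || lra).
    pose proof (ln_nonneg (z + 1) ltac:(lra)). unfold ml_err. lra.
Qed.

Lemma ml_term_0_div_ML_bounds (a y : R) : 0 < a -> 0 < y ->
  0 < ml_term a y 0 / ML a y <= 1 /\ - ln (ML a y) <= ln (ml_term a y 0 / ML a y).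
Proof.
  intros Ha Hy. pose proof (proj1 (ln_ML_bounds a y Ha Hy)) as HML.
  pose proof (ml_term_0_ge_1 a y) as Hterm. split.
  - split; [apply Rdiv_lt_0_compat; lra |].
    apply Rle_div_l; [lra |]. rewrite Rmult_1_l. apply ml_term_le_ML; assumption.
  - rewrite ln_div by lra. pose proof (ln_nonneg _ Hterm). lra.
Qed.

Section MLTail.

Variables (a y E : R) (w : nat -> R).
Hypotheses (Ha : 0 < a) (Hy : 0 < y) (HE : 0 < E)
  (w0_bounds : 0 < w 0%nat <= 1)
  (w_succ : forall n, w (S n) = ml_term a y (S n) / E).

Lemma ml_tail_nonneg (n : nat) : 0 <= w n.
Proof.
  destruct n as [| n]; [lra |]. rewrite w_succ.
  apply Rlt_le, Rdiv_lt_0_compat; [apply ml_term_pos |]; lra.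
Qed.

Lemma ex_series_ml_tail : ex_series w.
Proof.
  apply (ex_series_incr_1 w).
  apply (ex_series_ext (fun n => ml_term a y (S n) * / E)); [intros n; symmetry; apply w_succ |].
  apply ex_series_scal_r.
  apply (ex_series_incr_1 (ml_term a y)), ex_series_ml_term; assumption.
Qed.

Lemma Series_ml_tail_le : Series w <= 1 + ML a y / E.
Proof.
  assert (Hex : ex_series (ml_term a y)) by (apply ex_series_ml_term; assumption).
  rewrite (Series_incr_1 w ex_series_ml_tail).
  rewrite (Series_ext _ (fun n => ml_term a y (S n) * / E)) by (intros n; apply w_succ).
  rewrite Series_scal_r. unfold ML.
  change (fun k => y ^ k / Gamma (a * INR k + 1)) with (ml_term a y).
  rewrite (Series_incr_1 (ml_term a y) Hex).
  assert (0 <= ml_term a y 0 * / E)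
    by (apply Rmult_le_pos; [apply Rlt_le, ml_term_pos | apply Rlt_le, Rinv_0_lt_compat]; lra).
  unfold Rdiv. rewrite Rmult_plus_distr_r. lra.
Qed.

Lemma ln_Series_ml_tail_le : ln (Series w) <= ln 2 + Rmax (ln (ML a y) - ln E) 0.
Proof.
  pose proof (Series_ge_term w 0 ml_tail_nonneg ex_series_ml_tail).
  pose proof (proj1 (ln_ML_bounds a y Ha Hy)).
  rewrite <- ln_div by assumption.
  eapply Rle_trans; [apply ln_le; [lra | apply Series_ml_tail_le] |].
  apply ln_1_plus_le, Rdiv_lt_0_compat; assumption.
Qed.

Lemma ln_le_ln_Series_ml_tail (k : nat) : 0 < w k -> ln (w k) <= ln (Series w).
Proof.
  intros Hwk. apply ln_le; [exact Hwk |].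
  apply Series_ge_term; [exact ml_tail_nonneg | exact ex_series_ml_tail].
Qed.

(* The term with [a k] just below [Rpower y (1 / a)] already has the size of [ML a y]. *)
Lemma ln_Series_ml_tail_ge : a <= Rpower y (1 / a) ->
  Rpower y (1 / a) - ml_err a (Rpower y (1 / a)) - ln E <= ln (Series w).
Proof.
  intros Hbig.
  destruct (exists_INR_mul_near a (Rpower y (1 / a)) Ha ltac:(lra)) as [[| n] Hk];
    [simpl in Hk; lra |].
  assert (Hterm := ml_term_pos a y (S n) ltac:(lra) Hy).
  assert (Hw : 0 < w (S n)) by (rewrite w_succ; apply Rdiv_lt_0_compat; assumption).
  pose proof (ln_le_ln_Series_ml_tail (S n) Hw) as H.
  rewrite w_succ, ln_div in H by assumption.
  pose proof (ln_ml_term_ge a y (S n) Ha Hy Hk). lra.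
Qed.

End MLTail.

Definition summand (lam a0 ta0 a ta u t : R) (k : nat) : R :=
  dkj lam a0 a k k * (u * deltaj ta0 ta k t) ^ k / Dj lam a0 a k (deltaj ta0 ta k t).

Lemma summand_0 (lam a0 ta0 a ta u t : R) :
  summand lam a0 ta0 a ta u t 0 = ml_term a0 (lam * Rpower t ta0) 0 / ML a0 (lam * Rpower t ta0).
Proof.
  unfold summand, dkj, Dj, deltaj, ml_term. cbn [seq0 pow].
  unfold Rdiv. rewrite Rmult_1_r. reflexivity.
Qed.

Lemma summand_S (lam a0 ta0 a ta u t : R) (n : nat) :
  summand lam a0 ta0 a ta u t (S n) =
  ml_term a (lam * (u * Rpower t ta)) (S n) / ML a (lam * Rpower t ta).
Proof.
  unfold summand, dkj, Dj, deltaj, ml_term. cbn [seq0]. rewrite !Rpow_mult_distr. unfold Rdiv. ring.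
Qed.

(* [ln 2] comes from [ln_1_plus_le]; the terms in [t^(ta0/a0)] bound [- ln] of the summand
   [k = 0], which is [1 / E_{a0,1}(lam t^ta0)] up to the factor [1 / Gamma 1]. *)
Definition log_sum_err (lam a0 ta0 a ta u t : R) : R :=
  ln 2 + Rpower lam (1 / a0) * Rpower t (ta0 / a0)
  + ml_err a0 (Rpower lam (1 / a0) * Rpower t (ta0 / a0))
  + ml_err a (Rpower (lam * u) (1 / a) * Rpower t (ta / a))
  + ml_err a (Rpower lam (1 / a) * Rpower t (ta / a)).

Lemma ln_Series_summand_estimate (lam a0 ta0 a ta u t : R) :
  0 < lam -> 0 < a0 -> 0 < a -> 0 < u ->
  a <= Rpower (lam * u) (1 / a) * Rpower t (ta / a) ->
  Rabs (ln (Series (summand lam a0 ta0 a ta u t))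
        - Rpower t (ta / a) * Rmax (Rpower (lam * u) (1 / a) - Rpower lam (1 / a)) 0)
  <= log_sum_err lam a0 ta0 a ta u t.
Proof.
  intros Hlam Ha0 Ha Hu Hbig. unfold log_sum_err.
  set (T := Rpower t (ta / a)) in *.
  set (z0 := Rpower lam (1 / a0) * Rpower t (ta0 / a0)).
  set (zu := Rpower (lam * u) (1 / a) * T) in *. set (z1 := Rpower lam (1 / a) * T).
  set (y0 := lam * Rpower t ta0). set (y1 := lam * Rpower t ta).
  set (yu := lam * (u * Rpower t ta)).
  assert (Hy0 : 0 < y0) by (apply Rmult_lt_0_compat; [lra | apply Rpower_pos]).
  assert (Hy1 : 0 < y1) by (apply Rmult_lt_0_compat; [lra | apply Rpower_pos]).
  assert (Hyu : 0 < yu) by (apply Rmult_lt_0_compat; [| apply Rmult_lt_0_compat, Rpower_pos]; lra).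
  assert (Ez0 : Rpower y0 (1 / a0) = z0) by (apply Rpower_mult_Rpower_root; lra).
  assert (Ez1 : Rpower y1 (1 / a) = z1) by (apply Rpower_mult_Rpower_root; lra).
  assert (Ezu : Rpower yu (1 / a) = zu)
    by (unfold yu; rewrite <- Rmult_assoc; apply Rpower_mult_Rpower_root; nra).
  assert (Hz0 : 0 < z0) by (rewrite <- Ez0; apply Rpower_pos).
  destruct (ln_ML_bounds a0 y0 Ha0 Hy0) as [_ B0].
  destruct (ln_ML_bounds a y1 Ha Hy1) as [HE1 B1].
  destruct (ln_ML_bounds a yu Ha Hyu) as [_ Bu].
  rewrite Ez0 in B0. rewrite Ez1 in B1. rewrite Ezu in Bu.
  apply Rabs_le_between in B0, B1, Bu.
  set (w := summand lam a0 ta0 a ta u t).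
  assert (w_S : forall n, w (S n) = ml_term a yu (S n) / ML a y1) by (intros n; apply summand_S).
  assert (w_0 : w 0%nat = ml_term a0 y0 0 / ML a0 y0) by apply summand_0.
  destruct (ml_term_0_div_ML_bounds a0 y0 Ha0 Hy0) as [w0_bounds Hw0].
  rewrite <- w_0 in w0_bounds, Hw0.
  pose proof (ln_Series_ml_tail_le a yu (ML a y1) w Ha Hyu HE1 w0_bounds w_S) as Upper.
  pose proof (ln_le_ln_Series_ml_tail a yu (ML a y1) w Ha Hyu HE1 w0_bounds w_S 0
                (proj1 w0_bounds)).
  pose proof (ln_Series_ml_tail_ge a yu (ML a y1) w Ha Hyu HE1 w0_bounds w_S) as Lower.
  rewrite Ezu in Lower. specialize (Lower Hbig).
  pose proof (ln_nonneg 2 ltac:(lra)).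
  rewrite <- RmaxRmult by (left; apply Rpower_pos).
  replace (T * (Rpower (lam * u) (1 / a) - Rpower lam (1 / a))) with (zu - z1)
    by (unfold zu, z1; ring).
  rewrite Rmult_0_r. apply Rabs_le_between.
  unfold Rmax in *.
  destruct (Rle_dec (ln (ML a yu) - ln (ML a y1)) 0); destruct (Rle_dec (zu - z1) 0); lra.
Qed.

(** * Limits at infinity *)

Lemma is_lim_scal_Rpower (c q : R) : 0 < c -> 0 < q ->
  is_lim (fun t => c * Rpower t q) p_infty p_infty.
Proof.
  intros Hc Hq. apply is_lim_spec. intros M.
  exists (Rpower (Rmax M 1 / c) (1 / q)). intros t Ht.
  assert (HM : 0 < Rmax M 1 / c) by (apply Rdiv_lt_0_compat; [pose proof (Rmax_r M 1) |]; lra).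
  assert (Hlt : Rpower (Rpower (Rmax M 1 / c) (1 / q)) q < Rpower t q)
    by (apply Rlt_Rpower_l; [| split; [apply Rpower_pos |]]; assumption).
  rewrite Rpower_mult in Hlt. replace (1 / q * q) with 1 in Hlt by (field; lra).
  rewrite Rpower_1 in Hlt by exact HM.
  apply Rmult_lt_compat_l with (r := c) in Hlt; [| exact Hc].
  replace (c * (Rmax M 1 / c)) with (Rmax M 1) in Hlt by (field; lra).
  pose proof (Rmax_l M 1). lra.
Qed.

Lemma is_lim_Rpower (q : R) : 0 < q -> is_lim (fun t => Rpower t q) p_infty p_infty.
Proof.
  intros Hq. apply (is_lim_ext (fun t => 1 * Rpower t q)); [intros t; ring |].
  apply is_lim_scal_Rpower; lra.
Qed.

Lemma is_lim_affine_p_infty (c d : R) : 0 < c -> is_lim (fun z => c * z + d) p_infty p_infty.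
Proof.
  intros Hc. apply is_lim_spec. intros M. exists ((M - d) / c). intros z Hz.
  apply Rmult_lt_compat_l with (r := c) in Hz; [| exact Hc].
  replace (c * ((M - d) / c)) with (M - d) in Hz by (field; lra). lra.
Qed.

Lemma is_lim_affine_div (c d : R) : is_lim (fun z => (c * z + d) / z) p_infty c.
Proof.
  assert (Hinv : is_lim (fun z => d * / z) p_infty 0).
  { replace (Finite 0) with (Rbar_mult d (Rbar_inv p_infty)) by (simpl; f_equal; ring).
    apply is_lim_scal_l, is_lim_inv; [apply is_lim_id | discriminate]. }
  pose proof (is_lim_plus' (fun _ => c) _ p_infty c 0 (is_lim_const c p_infty) Hinv) as H.
  rewrite Rplus_0_r in H.
  apply (is_lim_ext_loc (fun z => c + d * / z) _ p_infty c); [| exact H].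
  exists 0. intros z Hz. field. lra.
Qed.

(* [h (g t) / T t = (h (g t) / g t) * (g t / T t)] once [g t <> 0]. *)
Lemma is_lim_div_comp (h g T : R -> R) (l : R) :
  is_lim (fun z => h z / z) p_infty 0 -> is_lim g p_infty p_infty ->
  is_lim (fun t => g t / T t) p_infty l ->
  is_lim (fun t => h (g t) / T t) p_infty 0.
Proof.
  intros Hh Hg HgT.
  assert (Hhg : is_lim (fun t => h (g t) / g t) p_infty 0)
    by (apply (is_lim_comp (fun z => h z / z) g p_infty 0 p_infty);
        [exact Hh | exact Hg | exists 0; discriminate]).
  pose proof (is_lim_mult _ _ _ _ _ Hhg HgT I) as H. simpl in H. rewrite Rmult_0_l in H.
  apply (is_lim_ext_loc (fun t => h (g t) / g t * (g t / T t)) _ p_infty 0); [| exact H].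
  destruct (proj2 (is_lim_spec g p_infty p_infty) Hg 0) as [M HM].
  exists M. intros t Ht. specialize (HM t Ht).
  unfold Rdiv. rewrite Rmult_assoc, <- (Rmult_assoc (/ g t)), Rinv_l, Rmult_1_l by lra.
  reflexivity.
Qed.

Lemma is_lim_ln_affine_div (c d : R) : 0 < c -> is_lim (fun z => ln (c * z + d) / z) p_infty 0.
Proof.
  intros Hc. apply (is_lim_div_comp ln (fun z => c * z + d) (fun z => z) c).
  - exact is_lim_div_ln_p.
  - apply is_lim_affine_p_infty, Hc.
  - apply is_lim_affine_div.
Qed.

Lemma is_lim_div_of_abs_sub_le (f e T : R -> R) (L : R) :
  (forall t, 0 < T t) -> is_lim (fun t => e t / T t) p_infty 0 ->
  Rbar_locally p_infty (fun t => Rabs (f t - T t * L) <= e t) ->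
  is_lim (fun t => f t / T t) p_infty L.
Proof.
  intros HT He Hbound.
  apply (is_lim_le_le_loc (fun t => L - e t / T t) (fun t => L + e t / T t)).
  - destruct Hbound as [M HM]. exists M. intros t Ht. specialize (HM t Ht).
    replace (f t - T t * L) with ((f t / T t - L) * T t) in HM by (field; apply Rgt_not_eq, HT).
    rewrite Rabs_mult, (Rabs_pos_eq (T t)) in HM by (left; apply HT).
    apply Rle_div_r in HM; [| apply HT]. apply Rabs_le_between in HM. lra.
  - pose proof (is_lim_minus' _ _ p_infty L 0 (is_lim_const L p_infty) He) as H.
    rewrite Rminus_0_r in H. exact H.
  - pose proof (is_lim_plus' _ _ p_infty L 0 (is_lim_const L p_infty) He) as H.
    rewrite Rplus_0_r in H. exact H.
Qed.

Lemma is_lim_ml_err_div (a : R) : 0 < a -> is_lim (fun z => ml_err a z / z) p_infty 0.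
Proof.
  intros Ha.
  apply (is_lim_ext_loc (fun z => (0 * z + (a + 3)) / z + ln (1 * z + 1) / z
                                  + ln (/ a * z + (1 + / a)) / z)).
  { exists 0. intros z Hz. unfold ml_err.
    replace (1 + (z + 1) / a) with (/ a * z + (1 + / a)) by (field; lra).
    replace (1 * z + 1) with (z + 1) by ring. unfold Rdiv. ring. }
  replace (Finite 0) with (Finite (0 + 0 + 0)) by (f_equal; ring).
  apply is_lim_plus'; [apply is_lim_plus' |].
  - apply is_lim_affine_div.
  - apply is_lim_ln_affine_div. lra.
  - apply is_lim_ln_affine_div, Rinv_0_lt_compat, Ha.
Qed.

Lemma is_lim_log_sum_err_div (lam a0 ta0 a ta u : R) :
  0 < lam -> 0 < a0 -> 0 < ta0 -> 0 < a -> 0 < ta -> 0 < u -> ta0 / a0 < ta / a ->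
  is_lim (fun t => log_sum_err lam a0 ta0 a ta u t / Rpower t (ta / a)) p_infty 0.
Proof.
  intros Hlam Ha0 Hta0 Ha Hta Hu Hgap.
  assert (Hq : 0 < ta / a) by (apply Rdiv_lt_0_compat; lra).
  assert (Hq0 : 0 < ta0 / a0) by (apply Rdiv_lt_0_compat; lra).
  set (T := fun t => Rpower t (ta / a)).
  set (z0 := fun t => Rpower lam (1 / a0) * Rpower t (ta0 / a0)).
  assert (HT : is_lim T p_infty p_infty) by (apply is_lim_Rpower, Hq).
  assert (Hz0 : is_lim z0 p_infty p_infty)
    by (apply is_lim_scal_Rpower; [apply Rpower_pos | exact Hq0]).
  assert (HscalT : forall c, is_lim (fun t => c * T t / T t) p_infty c).
  { intros c. apply (is_lim_ext (fun _ => c)); [| apply is_lim_const].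
    intros t. field. apply Rgt_not_eq, Rpower_pos. }
  assert (Hscaled : forall c, 0 < c -> is_lim (fun t => ml_err a (c * T t) / T t) p_infty 0).
  { intros c Hc. apply (is_lim_div_comp (ml_err a) (fun t => c * T t) T c);
      [apply is_lim_ml_err_div, Ha | apply is_lim_scal_Rpower; assumption | apply HscalT]. }
  assert (Hz0T : is_lim (fun t => z0 t / T t) p_infty 0).
  { apply (is_lim_ext (fun t => Rpower lam (1 / a0) * / Rpower t (ta / a - ta0 / a0))).
    - intros t. unfold z0, T.
      replace (ta / a) with ((ta / a - ta0 / a0) + ta0 / a0) at 2 by ring.
      rewrite Rpower_plus. field. split; apply Rgt_not_eq, Rpower_pos.
    - replace (Finite 0) with (Rbar_mult (Rpower lam (1 / a0)) (Rbar_inv p_infty))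
        by (simpl; f_equal; ring).
      apply is_lim_scal_l, is_lim_inv; [apply is_lim_Rpower; lra | discriminate]. }
  apply (is_lim_ext (fun t => (0 * T t + ln 2) / T t + z0 t / T t + ml_err a0 (z0 t) / T t
                               + ml_err a (Rpower (lam * u) (1 / a) * T t) / T t
                               + ml_err a (Rpower lam (1 / a) * T t) / T t)).
  { intros t. unfold log_sum_err, T, z0. unfold Rdiv. ring. }
  replace (Finite 0) with (Finite (0 + 0 + 0 + 0 + 0)) by (f_equal; ring).
  repeat apply is_lim_plus'.
  - apply (is_lim_div_comp (fun z => 0 * z + ln 2) T T 1); [apply is_lim_affine_div | exact HT |].
    apply (is_lim_ext (fun t => 1 * T t / T t)); [| apply HscalT].
    intros t. rewrite Rmult_1_l. reflexivity.
  - exact Hz0T.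
  - apply (is_lim_div_comp (ml_err a0) z0 T 0);
      [apply is_lim_ml_err_div, Ha0 | exact Hz0 | exact Hz0T].
  - apply Hscaled, Rpower_pos.
  - apply Hscaled, Rpower_pos.
Qed.

Theorem lemma4p1 (lam a0 ta0 a ta : R) :
  0 < lam ->
  0 < a0 <= 1 -> 0 < ta0 <= 1 -> 0 < a <= 1 -> 0 < ta <= 1 ->
  ta / a - ta0 / a0 > 0 ->
  forall u : R, 0 < u ->
    is_lim
      (fun t : R =>
         ln (Series (fun k : nat =>
               dkj lam a0 a k k * (u * deltaj ta0 ta k t) ^ k
               / Dj lam a0 a k (deltaj ta0 ta k t)))
         / Rpower t (ta / a))
      p_infty
      (Rmax (DeltaF lam a u - DeltaF lam a 1) 0)
    /\ Rmax (DeltaF lam a u - DeltaF lam a 1) 0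
       = Rmax (Rpower lam (1 / a) * (Rpower u (1 / a) - 1)) 0.
Proof.
  intros Hlam Ha0 Hta0 Ha Hta Hgap u Hu.
  unfold DeltaF. rewrite Rmult_1_r. split.
  - apply (is_lim_div_of_abs_sub_le (fun t => ln (Series (summand lam a0 ta0 a ta u t)))
             (log_sum_err lam a0 ta0 a ta u) (fun t => Rpower t (ta / a))).
    + intros t. apply Rpower_pos.
    + apply is_lim_log_sum_err_div; lra.
    + destruct (proj2 (is_lim_spec _ p_infty p_infty)
                  (is_lim_scal_Rpower (Rpower (lam * u) (1 / a)) (ta / a) (Rpower_pos _ _)
                     ltac:(apply Rdiv_lt_0_compat; lra)) a) as [M HM].
      exists M. intros t Ht. apply ln_Series_summand_estimate; try lra.
      left. apply HM, Ht.
  - rewrite <- Rpower_mult_distr by assumption. f_equal. ring.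
Qed.
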